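(* Let $L$ be a finite set of nests, $\mu>0$, and $\mu_\ell\in(0,\mu]$ for each $\ell\in L$. Let $\sigma_{i\ell}\ge 0$ ($i=1,\dots,n$, $\ell\in L$) satisfy $\sum_{\ell\in L}\sigma_{i\ell}=1$ for each $i$. Define the generalized nested logit generating function \[ G(x)=\sum_{\ell\in L}\left(\sum_{i=1}^n\left(\sigma_{i\ell}\,x^{(i)}\right)^{1/\mu_\ell}\right)^{\mu_\ell/\mu},\qquad x\in\mathbb{R}^n_+, \] and the surplus function $E(u)=\mu\ln G(e^{u})$. Then $E$ is $C$-differentially-consistent with $C=\dfrac{1}{\min_{\ell\in L}\mu_\ell}$, i.e. for all $U\in(-\infty,0)^n$ and all $i=1,\dots,n$, \[ \frac{\partial^2 E(U)}{\partial U^{(i)2}}\le \frac{1}{\min_{\ell\in L}\mu_\ell}\cdot\frac{\partial E(U)}{\partial U^{(i)}}. \]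
   Context: For $u\in\mathbb{R}^n$, $e^{u}$ denotes the componentwise exponential $(e^{u^{(1)}},\dots,e^{u^{(n)}})^T$. $\mathbb{R}^n_+$ is the set of vectors with nonnegative components. A convex function $f$ is called $C$-differentially-consistent (for a constant $C>0$) if $\nabla^2_{ii}f(U)\le C\,\nabla_i f(U)$ for all $U\in(-\infty,0)^n$ and all $i$. *)

From HB Require Import structures.
From mathcomp Require Import all_boot all_order all_algebra.
From mathcomp Require Import all_classical all_reals all_analysis.
Set Implicit Arguments. Unset Strict Implicit. Unset Printing Implicit Defensive.
Import Order.TTheory GRing.Theory Num.Theory.
Local Open Scope ring_scope.

(* Generalized nested logit generating function
   G(x) = sum_l ( sum_i (sigma_il x_i)^(1/mu_l) )^(mu_l/mu).
   powR: 0 `^ a = 0 for a <> 0, the usual convention. *)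
Definition GNL (R : realType) (n : nat) (L : finType) (mu : R) (mul : L -> R)
  (sigma : 'I_n -> L -> R) (x : 'I_n -> R) : R :=
  \sum_(l : L) (\sum_(i < n) (sigma i l * x i) `^ (mul l)^-1) `^ (mul l / mu).

Definition surplus (R : realType) (n : nat) (L : finType) (mu : R) (mul : L -> R)
  (sigma : 'I_n -> L -> R) (u : 'I_n -> R) : R :=
  mu * ln (GNL mu mul sigma (fun i => expR (u i))).

Definition partial (R : realType) (n : nat) (i : 'I_n) (f : ('I_n -> R) -> R)
  (U : 'I_n -> R) : R :=
  derive1 (fun t : R => f (fun j => U j + (if j == i then t else 0))) 0.

(* min over L of mu_l (the default mu is >= every mu_l, so this is the true
   minimum whenever L is nonempty). *)
Definition min_mu (R : realType) (L : finType) (mu : R) (mul : L -> R) : R :=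
  \big[Num.min/mu]_(l : L) mul l.

From HB Require Import structures.
From mathcomp Require Import all_boot all_order all_algebra.
From mathcomp Require Import all_classical all_reals all_analysis.
From mathcomp Require Import ring lra.
Import Order.TTheory GRing.Theory Num.Theory.
Local Open Scope ring_scope.

Lemma psumr_gt0 (R : numDomainType) (I : finType) (F : I -> R) (l0 : I) :
  (forall l, 0 <= F l) -> 0 < F l0 -> 0 < \sum_l F l.
Proof. by move=> F_ge0 Fl0_gt0; rewrite (bigD1 l0) //= ltr_pwDl // sumr_ge0. Qed.

Section diff_consistent.
Context {R : realType}.
Implicit Types (a b c p C k x : R) (f g h : R -> R).

(* One-variable differential consistency, strengthened by monotonicity: f' >= 0 is what
   allows sums and a larger constant. *)
Definition diff_consistent C f := exists f' f'' : R -> R, forall x : R,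
  [/\ is_derive x 1 f (f' x), is_derive x 1 f' (f'' x), 0 <= f' x & f'' x <= C * f' x].

Lemma diff_consistent_derive1 C f x :
  diff_consistent C f -> derive1 (derive1 f) x <= C * derive1 f x.
Proof.
move=> [f' [f'' df]].
have -> : derive1 f = f' by apply/funext => y; have [? _ _ _] := df y; rewrite derive1E derive_val.
by have [_ ? _ le] := df x; rewrite derive1E derive_val.
Qed.

Lemma diff_consistent_le C C' f :
  C <= C' -> diff_consistent C f -> diff_consistent C' f.
Proof.
move=> CC' [f' [f'' df]]; exists f', f'' => x; have [? ? f'x_ge0 le] := df x.
by split=> //; apply: le_trans le _; rewrite ler_wpM2r.
Qed.

Lemma diff_consistent_cst C k : diff_consistent C (cst k).
Proof.
by exists (cst 0), (cst 0) => x; split; rewrite ?mulr0 //; exact: is_derive_cst.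
Qed.

Lemma diff_consistentD C f g :
  diff_consistent C f -> diff_consistent C g -> diff_consistent C (f \+ g).
Proof.
move=> [f' [f'' df]] [g' [g'' dg]]; exists (f' \+ g'), (f'' \+ g'') => x.
have [? ? ? ?] := df x; have [? ? ? ?] := dg x.
by split; rewrite /= ?addr_ge0 ?mulrDr ?lerD //; exact: is_deriveD.
Qed.

Lemma diff_consistent_sum (I : finType) C (F : I -> R -> R) :
  (forall l, diff_consistent C (F l)) ->
  diff_consistent C (fun x => \sum_l F l x).
Proof.
move=> dF; rewrite -fct_sumE; apply: big_ind => //.
- exact: diff_consistent_cst.
- exact: diff_consistentD.
Qed.

Lemma diff_consistentZ C k f :
  0 <= k -> diff_consistent C f -> diff_consistent C (fun x => k * f x).
Proof.
move=> k_ge0 [f' [f'' df]]; exists (fun x => k * f' x), (fun x => k * f'' x) => x.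
have [? ? ? ?] := df x.
split; [exact: is_deriveZ | exact: is_deriveZ | exact: mulr_ge0 |].
by rewrite mulrCA ler_wpM2l.
Qed.

Lemma diff_consistent_ln C h :
  (forall x, 0 < h x) -> diff_consistent C h -> diff_consistent C (fun x => ln (h x)).
Proof.
move=> h_gt0 [h' [h'' dh]].
exists (fun x => h' x / h x), (fun x => h'' x / h x - (h' x / h x) ^+ 2) => x.
have [dhx dh'x h'x_ge0 le] := dh x; have hx_gt0 := h_gt0 x.
split.
- apply: is_derive_eq; first exact: is_derive1_comp (is_derive1_ln hx_gt0) dhx.
  by rewrite mulrC.
- apply: is_derive_eq; first exact: is_deriveM dh'x (is_deriveV (lt0r_neq0 hx_gt0) dhx).
  rewrite /GRing.scale /=; field; exact: lt0r_neq0.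
- by rewrite divr_ge0 // ltW.
- have : h'' x / h x <= C * (h' x / h x) by rewrite mulrA ler_pM2r ?invr_gt0.
  have := sqr_ge0 (h' x / h x); lra.
Qed.

Lemma is_derive_mul_expR b c x :
  is_derive x 1 (fun t => b * expR (c * t)) (c * (b * expR (c * x))).
Proof.
have d : is_derive x 1 (fun t => b * expR (c * t)) _ :=
  is_deriveZ b (is_derive1_comp (is_derive_expR _) (is_deriveZ c (is_derive_id x 1))).
by apply: is_derive_eq d _; rewrite /GRing.scale /=; ring.
Qed.

Lemma diff_consistent_powR_expR a b c p :
  0 <= a -> 0 <= b -> 0 <= c -> 0 <= p <= 1 ->
  diff_consistent c (fun t => (a + b * expR (c * t)) `^ p).
Proof.
move=> a_ge0 b_ge0 c_ge0 /andP[p_ge0 p_le1].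
(* For b = 0 the base may vanish, where powR is not differentiable; g is then constant. *)
have [->|b_neq0] := eqVneq b 0.
  rewrite (_ : (fun _ => _) = cst (a `^ p)); first exact: diff_consistent_cst.
  by apply/funext => t; rewrite mul0r addr0.
have b_gt0 : 0 < b by rewrite lt_def b_neq0.
set q := fun t => b * expR (c * t).
have S_gt0 x : 0 < a + q x by rewrite ltr_wpDl // mulr_gt0 // expR_gt0.
have dpow r x : is_derive x 1 (fun t => (a + q t) `^ r) (r * (a + q x) `^ (r - 1) * (c * q x)).
  have dS : is_derive x 1 (fun t => a + q t) _ :=
    is_deriveD (is_derive_cst a x 1) (is_derive_mul_expR b c x).
  have d : is_derive x 1 (fun t => (a + q t) `^ r) _ :=
    is_derive1_comp (g := fun t => a + q t) (is_derive1_powR r (S_gt0 x)) dS.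
  by apply: is_derive_eq d _; rewrite add0r.
exists (fun x => p * c * ((a + q x) `^ (p - 1) * q x)).
exists (fun x => p * c * ((p - 1) * c * (a + q x) `^ (p - 1 - 1) * q x ^+ 2
                          + c * (a + q x) `^ (p - 1) * q x)) => x.
split.
- by apply: is_derive_eq (dpow p x) _; ring.
- have d : is_derive x 1 (fun t => p * c * ((a + q t) `^ (p - 1) * q t)) _ :=
    is_deriveZ (p * c) (is_deriveM (dpow (p - 1) x) (is_derive_mul_expR b c x)).
  by apply: is_derive_eq d _; rewrite /GRing.scale /= /q; ring.
- by rewrite !mulr_ge0 ?powR_ge0 // ltW.
- have : p * c * ((p - 1) * c * (a + q x) `^ (p - 1 - 1) * q x ^+ 2) <= 0.
    rewrite mulr_ge0_le0 ?mulr_ge0 // -mulrA mulr_le0_ge0 ?mulr_ge0 ?powR_ge0 ?sqr_ge0 //.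
    by rewrite mulr_le0_ge0 // subr_le0.
  lra.
Qed.

End diff_consistent.

Section coordinate_line.
Context {R : realType} {n : nat}.
Implicit Types (f : ('I_n -> R) -> R) (U : 'I_n -> R) (i : 'I_n).

Definition coord_line f U i (t : R) : R :=
  f (fun j => U j + (if j == i then t else 0)).

(* No differentiability is needed: both sides are limits of the same difference quotients. *)
Lemma coord_line_partial f U i :
  coord_line (partial i f) U i = derive1 (coord_line f U i).
Proof.
apply/funext => t; rewrite /coord_line /partial /derive1.
do 2 f_equal; apply/funext => h /=; congr (_ *: (_ - _)); congr f; apply/funext => j.
  by case: (j == i); ring.
by case: (j == i); ring.
Qed.

Lemma coord_line_surplus (L : finType) (mu : R) (mul : L -> R)
    (sigma : 'I_n -> L -> R) U i :
  (forall j l, 0 <= sigma j l) ->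
  coord_line (surplus mu mul sigma) U i = fun t => mu * ln (\sum_l
    (\sum_(j < n | j != i) (sigma j l * expR (U j)) `^ (mul l)^-1
     + (sigma i l * expR (U i)) `^ (mul l)^-1 * expR ((mul l)^-1 * t)) `^ (mul l / mu)).
Proof.
move=> sigma_ge0; apply/funext => t; rewrite /coord_line /surplus /GNL.
congr (_ * ln _); apply: eq_bigr => l _; congr (_ `^ _).
rewrite [LHS](bigD1 i) //= eqxx addrC; apply: congr2.
  by apply: eq_bigr => j /negPf ->; rewrite addr0.
by rewrite expRD mulrA powRM ?mulr_ge0 ?expR_ge0 // -expRM (mulrC t).
Qed.

End coordinate_line.

Theorem theorem3 (R : realType) (n : nat) (L : finType) (mu : R) (mul : L -> R)
  (sigma : 'I_n -> L -> R)
  (hmu : 0 < mu)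
  (hmul : forall l, 0 < mul l /\ mul l <= mu)
  (hsig0 : forall i l, 0 <= sigma i l)
  (hsig1 : forall i, \sum_(l : L) sigma i l = 1)
  (U : 'I_n -> R) (hU : forall j, U j < 0) (i : 'I_n) :
  partial i (partial i (surplus mu mul sigma)) U
    <= (min_mu mu mul)^-1 * partial i (surplus mu mul sigma) U.
Proof.
have [l0 /andP[_ sigma_gt0]] : exists l, true && (0 < sigma i l).
  by apply: psumr_neq0P => //; rewrite hsig1; apply/eqP/oner_neq0.
change (derive1 (coord_line (partial i (surplus mu mul sigma)) U i) 0
  <= (min_mu mu mul)^-1 * derive1 (coord_line (surplus mu mul sigma) U i) 0).
rewrite coord_line_partial coord_line_surplus //.
apply: diff_consistent_derive1; apply: diff_consistentZ (ltW hmu) _.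
apply: diff_consistent_ln => [t|].
  apply: (psumr_gt0 _ _ _ l0) => [l|]; first exact: powR_ge0.
  rewrite powR_gt0 //; apply: ltr_wpDl.
  - by apply: sumr_ge0 => j _; exact: powR_ge0.
  - by rewrite mulr_gt0 ?expR_gt0 // powR_gt0 // mulr_gt0 // expR_gt0.
apply: diff_consistent_sum => l; have [mul_gt0 mul_le] := hmul l.
apply: diff_consistent_le (diff_consistent_powR_expR _ _ _ _ _ _ _ _).
- have min_mu_gt0 : 0 < min_mu mu mul by apply: lt_bigmin => // k _; case: (hmul k).
  by rewrite lef_pV2 ?posrE //; exact: bigmin_le.
- by rewrite sumr_ge0 // => j _; exact: powR_ge0.
- exact: powR_ge0.
- by rewrite invr_ge0 ltW.
- by rewrite ler_pdivrMr // mul1r mul_le andbT divr_ge0 ?ltW.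
Qed.
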